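(* Let $n,m\ge 3$ and let $G=P_n\square P_m$ be the grid graph. Every $3$-minimal of $G$ contains at least two vertices on the same line.
   Context: The grid graph $P_n\square P_m$ has vertex set $\{(i,j):0\le i\le n-1,\ 0\le j\le m-1\}$, with $(i,j)$ adjacent to $(k,l)$ iff $|i-k|+|j-l|=1$; distance $d((i,j),(k,l))=|i-k|+|j-l|$. A vertex $w$ resolves $u,v$ if $d(w,u)\ne d(w,v)$; a set $R$ is resolving if every pair of distinct vertices is resolved by some vertex of $R$; a $3$-minimal is a resolving set $R$ of cardinality $3$ such that no $R\setminus\{x\}$, $x\in R$, is resolving. Two vertices are on the same line if they share their first coordinate or share their second coordinate. *)

From mathcomp Require Import all_boot.
Set Implicit Arguments. Unset Strict Implicit. Unset Printing Implicit Defensive.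

Definition gvert (n m : nat) := ('I_n * 'I_m)%type.

Definition absdiff (a b : nat) : nat := (a - b) + (b - a).

(* Grid (Manhattan) distance: d((i,j),(k,l)) = |i-k| + |j-l|. *)
Definition gdist (n m : nat) (u v : gvert n m) : nat :=
  absdiff u.1 v.1 + absdiff u.2 v.2.

Definition resolves (n m : nat) (w u v : gvert n m) : bool :=
  gdist w u != gdist w v.

Definition resolving (n m : nat) (R : {set gvert n m}) : Prop :=
  forall u v : gvert n m, u <> v -> exists2 w, w \in R & resolves w u v.

Definition three_minimal (n m : nat) (R : {set gvert n m}) : Prop :=
  [/\ #|R| = 3, resolving R & forall x, x \in R -> ~ resolving (R :\ x)].

Definition same_line (n m : nat) (u v : gvert n m) : bool :=
  (u.1 == v.1) || (u.2 == v.2).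

From mathcomp Require Import all_boot zify.

Set Implicit Arguments.
Unset Strict Implicit.
Unset Printing Implicit Defensive.

(* If no two of them share a line, one of them is a corner of the triangle they
   span: strictly left or right of the other two and strictly above or below them.
   Separating that corner from the other two by a vertical and a horizontal cut
   through a unit square puts all three vertices in the same pair of opposite
   quadrants of the square; they are then equidistant from the two corners of the
   square on the other diagonal, so that pair is not resolved. *)

Definition extreme (x y z : nat) : bool := (x < y) && (x < z) || (y < x) && (z < x).

Definition corner (n m : nat) (a b c : gvert n m) : bool :=
  extreme a.1 b.1 c.1 && extreme a.2 b.2 c.2.

Lemma absdiff_same_quadrants p q x y : (x <= p) == (y <= q) ->
  absdiff x p + absdiff y q.+1 = absdiff x p.+1 + absdiff y q.
Proof. rewrite /absdiff; lia. Qed.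

Lemma absdiff_opposite_quadrants p q x y : (x <= p) != (y <= q) ->
  absdiff x p + absdiff y q = absdiff x p.+1 + absdiff y q.+1.
Proof. rewrite /absdiff; lia. Qed.

Lemma extreme_cut k x y z : x < k -> y < k -> z < k -> extreme x y z ->
  exists2 p, p.+1 < k & (y <= p) = ~~ (x <= p) /\ (z <= p) = ~~ (x <= p).
Proof. by move=> xk yk zk /orP[] ext; [exists x | exists x.-1]; move: ext; lia. Qed.

Lemma not_resolving_equidistant n m (R : {set gvert n m}) (u v : gvert n m) :
  u <> v -> {in R, forall w, gdist w u = gdist w v} -> ~ resolving R.
Proof. by move=> uv Ruv /(_ u v uv) [w /Ruv uvw]; rewrite /resolves uvw eqxx. Qed.

Lemma not_resolving_quadrants n m (R : {set gvert n m}) p q (b : bool) :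
  p.+1 < n -> q.+1 < m ->
  {in R, forall w : gvert n m, ((w.1 <= p) == (w.2 <= q)) = b} -> ~ resolving R.
Proof.
move=> pn qm Rb; have [pn' qm'] := (ltnW pn, ltnW qm).
case: b Rb => Rb.
- apply: (@not_resolving_equidistant _ _ _
            (Ordinal pn', Ordinal qm) (Ordinal pn, Ordinal qm')); first by case; lia.
  by move=> w /Rb wq; rewrite /gdist /= absdiff_same_quadrants ?wq.
- apply: (@not_resolving_equidistant _ _ _
            (Ordinal pn', Ordinal qm') (Ordinal pn, Ordinal qm)); first by case; lia.
  by move=> w /Rb wq; rewrite /gdist /= absdiff_opposite_quadrants ?wq.
Qed.

Lemma corner_not_resolving n m (a b c : gvert n m) :
  corner a b c -> ~ resolving [set a; b; c].
Proof.
case/andP=> ext1 ext2.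
have [p pn [b1 c1]] := extreme_cut (ltn_ord a.1) (ltn_ord b.1) (ltn_ord c.1) ext1.
have [q qm [b2 c2]] := extreme_cut (ltn_ord a.2) (ltn_ord b.2) (ltn_ord c.2) ext2.
apply: (not_resolving_quadrants pn qm (b := (a.1 <= p) == (a.2 <= q))).
move=> w; rewrite !inE => /orP[/orP[]|] /eqP->;
  by rewrite ?b1 ?b2 ?c1 ?c2; case: (a.1 <= p); case: (a.2 <= q).
Qed.

Lemma some_corner n m (a b c : gvert n m) :
  ~~ same_line a b -> ~~ same_line a c -> ~~ same_line b c ->
  [|| corner a b c, corner b a c | corner c a b].
Proof.
(* Each coordinate has exactly one middle vertex, so some vertex is extreme in both. *)
by rewrite /same_line /corner /extreme -!val_eqE /=; lia.
Qed.

Lemma cards3_triple (T : finType) (A : {set T}) : #|A| = 3 ->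
  exists a b c, [/\ A = [set a; b; c], a != b, a != c & b != c].
Proof.
move=> A3; have /card_gt0P [a aA] : 0 < #|A| by rewrite A3.
have /cards2P [b [c [bc Abc]]] : #|A :\ a| == 2.
  by move: (cardsD1 a A); rewrite aA A3 add1n => -[->].
have /setD1P [ba _] : b \in A :\ a by rewrite Abc !inE eqxx.
have /setD1P [ca _] : c \in A :\ a by rewrite Abc !inE eqxx orbT.
by exists a, b, c; rewrite -setUA -Abc setD1K // ![a == _]eq_sym.
Qed.

Lemma resolving_card3_same_line n m (R : {set gvert n m}) :
  #|R| = 3 -> resolving R ->
  exists u v, [/\ u \in R, v \in R, u != v & same_line u v].
Proof.
case/cards3_triple=> [a [b [c [-> ab ac bc]]]] res.
case: (boolP (same_line a b)) => [? | nab]; first by exists a, b; split; rewrite // !inE eqxx ?orbT.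
case: (boolP (same_line a c)) => [? | nac]; first by exists a, c; split; rewrite // !inE eqxx ?orbT.
case: (boolP (same_line b c)) => [? | nbc]; first by exists b, c; split; rewrite // !inE eqxx ?orbT.
exfalso; case/or3P: (some_corner nab nac nbc) => /corner_not_resolving; apply.
- exact: res.
- by rewrite [[set b] :|: _]setUC.
- by rewrite -setUA setUC.
Qed.

Theorem lemma3 (n m : nat) (hn : 3 <= n) (hm : 3 <= m) (R : {set gvert n m}) :
  three_minimal R ->
  exists u v, [/\ u \in R, v \in R, u != v & same_line u v].
Proof. by case=> R3 res _; apply: resolving_card3_same_line. Qed.
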